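(* Let $m,n\in\mathbb{N}_0$ with $m>n$, and let \[ \mathcal{F}_{m,n}=\{p(x)+\ln(x)q(x):\ p\in\Pi_m,\ q\in\Pi_n\}, \] considered as functions on $(1,\infty)$. Then every nonzero $f\in\mathcal{F}_{m,n}$ has at most $m+n+1$ distinct zeros in $(1,\infty)$.
   Context: $\Pi_n$ denotes the space of real polynomials of degree at most $n$. *)

From HB Require Import structures.
From mathcomp Require Import all_boot all_order all_algebra.
From mathcomp Require Import all_classical all_reals all_analysis.
Set Implicit Arguments. Unset Strict Implicit. Unset Printing Implicit Defensive.
Import Order.TTheory GRing.Theory Num.Theory.
Local Open Scope ring_scope.

Definition plnq (R : realType) (p q : {poly R}) (x : R) : R :=
  p.[x] + ln x * q.[x].

From HB Require Import structures.
From mathcomp Require Import all_boot all_order all_algebra.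
From mathcomp Require Import all_classical all_reals all_analysis.
From mathcomp Require Import ring.
Import Order.TTheory GRing.Theory Num.Theory numFieldNormedType.Exports.
Set Implicit Arguments.
Unset Strict Implicit.
Unset Printing Implicit Defensive.
Local Open Scope ring_scope.

(* The proof is a Rolle-type descent in the spirit of Descartes' rule.
   Dividing f by x^m and differentiating gives
       (f / x^m)' = (x f' - m f) / x^(m+1),
   and x f' - m f is again of the form p1 + ln * q1, where
       p1 = E_m p + q,  q1 = E_m q,  E_m r = X r' - m r.
   The operator E_m kills the coefficient of degree m, so when deg q < m the
   pair (deg p1, deg q1) drops to (m - 1, deg q), and when deg q = m it drops to
   (m, m - 1).  By Rolle's theorem applied to f / x^m, f1 = x f' - m f has at
   most one zero fewer than f; and f1 cannot vanish identically, for then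
   f / x^m would be constant, hence zero as it vanishes at a zero of f.
   Induction on the degree budget m + (deg q + 1) gives the bound m + n + 1. *)

Section RolleOnHalfLine.
Variables (R : realType) (a : R) (g g' : R -> R).
Hypothesis g_deriv : forall x, a < x -> is_derive x (1 : R) g (g' x).

Lemma half_line_continuous (x y : R) :
  a < x -> {within `[x, y], continuous g}%classic.
Proof.
move=> ax; apply: derivable_within_continuous => z zxy; apply: ex_derive.
by apply: g_deriv; apply: lt_le_trans ax _; rewrite (itvP zxy).
Qed.

(* Between consecutive zeros of g along an increasing path there is a zero of
   g', so an increasing path of k zeros after x yields k zeros of g' after x. *)
Lemma rolle_path (l : seq R) (x : R) : a < x -> g x = 0 -> path <%R x l ->
  (forall y, y \in l -> g y = 0) ->
  exists t : seq R, [/\ size t = size l, path <%R x t &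
    forall y, y \in t -> g' y = 0].
Proof.
elim: l x => [|y l IH] x ax gx /=; first by exists [::].
move=> /andP[xy pl] gl.
have [t [st pt g't]] := IH y (lt_trans ax xy) (gl y (mem_head _ _)) pl
  (fun z zl => gl z (@mem_behead _ (y :: l) _ zl)).
have [c cxy dc] : exists2 c, c \in `]x, y[ & is_derive c 1 g 0.
  apply: Rolle => //; last by rewrite gx gl ?mem_head.
  - move=> z zxy; apply: ex_derive; apply: g_deriv.
    by apply: lt_trans ax _; rewrite (itvP zxy).
  - exact: half_line_continuous.
have ac : a < c by apply: lt_trans ax _; rewrite (itvP cxy).
exists (c :: t); split => /=; first by rewrite st.
- rewrite (itvP cxy) /=; apply: path_le pt; first exact: lt_trans.
  by rewrite (itvP cxy).
- move=> z; rewrite inE => /orP[/eqP ->|/g't //].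
  by case: (g_deriv ac) => _ <-; case: dc.
Qed.

Lemma rolle_zeros (s : seq R) : uniq s ->
  (forall x, x \in s -> a < x /\ g x = 0) ->
  exists t : seq R, [/\ uniq t, size t = (size s).-1 &
    forall y, y \in t -> a < y /\ g' y = 0].
Proof.
move=> us zs; rewrite -(size_sort <=%R s).
have : sorted <%R (sort <=%R s) by rewrite sort_lt_sorted.
have : forall x, x \in sort <=%R s -> a < x /\ g x = 0.
  by move=> x; rewrite mem_sort; apply: zs.
case: (sort <=%R s) => [|x l] /= zl; first by exists [::].
move=> pl; have [ax gx] := zl x (mem_head _ _).
have [t [st pt g't]] :=
  rolle_path ax gx pl (fun y yl => (zl y (@mem_behead _ (x :: l) _ yl)).2).
exists t; split => //; first exact: lt_sorted_uniq (path_sorted pt).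
move=> y yt; split; last exact: g't.
by move: pt; rewrite lt_path_sortedE => /andP[/allP/(_ y yt)/(lt_trans ax)].
Qed.

Lemma deriv0_const : (forall x, a < x -> g' x = 0) ->
  forall x y, a < x -> a < y -> g x = g y.
Proof.
move=> g'0.
suff lt_const x y : a < x -> x < y -> g x = g y.
  move=> x y ax ay; case: (ltgtP x y) => [|yx|-> //]; first exact: lt_const.
  exact/esym/lt_const.
move=> ax xy.
have [c cxy] : exists2 c, c \in `]x, y[ & g y - g x = g' c * (y - x).
  apply: MVT => //; last exact: half_line_continuous.
  by move=> z zxy; apply: g_deriv; apply: (lt_trans ax); rewrite (itvP zxy).
rewrite g'0 ?mul0r; last by apply: (lt_trans ax); rewrite (itvP cxy).
by move/eqP; rewrite subr_eq0 => /eqP.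
Qed.

End RolleOnHalfLine.

Section EulerOperator.
Variable R : nzRingType.

Definition euler (m : nat) (r : {poly R}) : {poly R} := 'X * r^`() - m%:R *: r.

Lemma coef_euler (m j : nat) (r : {poly R}) :
  (euler m r)`_j = (j%:R - m%:R) * r`_j.
Proof.
rewrite /euler coefB coefXM coefZ mulrBl.
case: j => [|j] /=; first by rewrite mul0r.
by rewrite coef_deriv (mulr_natl _ j.+1).
Qed.

Lemma size_euler_le (m k : nat) (r : {poly R}) :
  (size r <= k)%N -> (size (euler m r) <= k)%N.
Proof.
move=> rk; apply/leq_sizeP => j kj.
by rewrite coef_euler (leq_sizeP _ _ rk) ?mulr0.
Qed.

Lemma size_euler_drop (m : nat) (r : {poly R}) :
  (size r <= m.+1)%N -> (size (euler m r) <= m)%N.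
Proof.
move=> rm; apply/leq_sizeP => j mj; rewrite coef_euler.
have [<-|jm] := eqVneq j m; first by rewrite subrr mul0r.
by rewrite (leq_sizeP _ _ rm) ?mulr0 // ltn_neqAle eq_sym jm.
Qed.

End EulerOperator.

Section LogPolynomials.
Variables (R : realType) (a : R).
Hypothesis a_ge0 : 0 <= a.

(* The pair describing x f' - m f for f = p + ln * q. *)
Definition euler_pair (m : nat) (p q : {poly R}) : {poly R} * {poly R} :=
  (euler m p + q, euler m q).

Lemma plnq_size0 (p q : {poly R}) (x : R) :
  (size p <= 0)%N -> (size q <= 0)%N -> plnq p q x = 0.
Proof.
rewrite !size_poly_leq0 => /eqP -> /eqP ->.
by rewrite /plnq !horner0 mulr0 addr0.
Qed.

Lemma is_derive_plnq (p q : {poly R}) (x : R) : 0 < x ->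
  is_derive x (1 : R) (plnq p q) (p^`().[x] + (ln x * q^`().[x] + q.[x] * x^-1)).
Proof.
move=> x0; have -> : plnq p q = (horner p + (@ln R * horner q))%R by [].
exact: is_deriveD (is_deriveM (is_derive1_ln x0) (is_derive_poly q x)).
Qed.

Lemma is_derive_plnq_weighted (m : nat) (p q : {poly R}) (x : R) : 0 < x ->
  is_derive x (1 : R) (fun y => plnq p q y / y ^+ m)
    (plnq (euler_pair m p q).1 (euler_pair m p q).2 x / x ^+ m.+1).
Proof.
move=> x0; have x_neq0 : x != 0 by rewrite gt_eqF.
have xm_neq0 : ('X^m : {poly R}).[x] != 0 by rewrite hornerXn expf_neq0.
have dV := is_deriveV xm_neq0 (is_derive_poly 'X^m x).
have -> : (fun y => plnq p q y / y ^+ m)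
          = (plnq p q * (fun y => (horner 'X^m y)^-1))%R.
  by apply/funext => y; rewrite !fctE hornerXn.
apply: is_derive_eq; first exact: is_deriveM (is_derive_plnq p q x0) dV.
rewrite /plnq /euler !hornerE derivXn hornerMn hornerXn /GRing.scale /=.
case: m {xm_neq0 dV} => [|k]; first by rewrite !expr0 mulr0n; field.
have xk_neq0 : x ^+ k != 0 by rewrite expf_neq0.
by rewrite -mulr_natr !exprS; field; rewrite xk_neq0 x_neq0.
Qed.

Lemma plnq_descent (m : nat) (p q : {poly R}) (s : seq R) :
  (exists x, a < x /\ plnq p q x != 0) -> s != [::] -> uniq s ->
  (forall x, x \in s -> a < x /\ plnq p q x = 0) ->
  let f1 := plnq (euler_pair m p q).1 (euler_pair m p q).2 in
  (exists x, a < x /\ f1 x != 0) /\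
  exists t : seq R, [/\ uniq t, size t = (size s).-1 &
    forall y, y \in t -> a < y /\ f1 y = 0].
Proof.
move=> [x0 [ax0 fx0]] s_nil us zs f1.
have pos x : a < x -> 0 < x by move/(le_lt_trans a_ge0).
pose g y := plnq p q y / y ^+ m; pose g' y := f1 y / y ^+ m.+1.
have dg x : a < x -> is_derive x (1 : R) g (g' x).
  by move=> /pos; apply: is_derive_plnq_weighted.
have div_eq0 (h : R -> R) k y : a < y -> (h y / y ^+ k == 0) = (h y == 0).
  move=> /pos y0; have yk_neq0 : y ^+ k != 0 by rewrite expf_neq0 // gt_eqF.
  by rewrite mulf_eq0 invr_eq0 (negbTE yk_neq0) orbF.
have zg x : x \in s -> a < x /\ g x = 0.
  by move=> /zs[ax fx]; split => //; rewrite /g fx mul0r.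
split.
- apply: contrapT => f1_zero.
  have g'0 x : a < x -> g' x = 0.
    move=> ax; apply/eqP; rewrite div_eq0 //; apply: contrapT => f1x.
    by apply: f1_zero; exists x; split => //; apply/negP.
  case: s s_nil {us zs} zg => // z s' _ /(_ z (mem_head _ _))[az gz].
  move: (deriv0_const dg g'0 ax0 az) fx0; rewrite gz => /eqP.
  by rewrite div_eq0 // => ->.
- have [t [ut st zt]] := rolle_zeros dg us zg.
  exists t; split => // y /zt[ay /eqP]; rewrite div_eq0 //.
  by move/eqP; split.
Qed.

Lemma size_euler_pair_lt (m n : nat) (p q : {poly R}) :
  (n <= m)%N -> (size p <= m.+1)%N -> (size q <= n)%N ->
  (size (euler_pair m p q).1 <= m)%N /\ (size (euler_pair m p q).2 <= n)%N.
Proof.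
move=> nm sp sq; split; last exact: size_euler_le.
rewrite (leq_trans (size_polyD _ _)) // geq_max size_euler_drop //.
exact: leq_trans nm.
Qed.

Lemma size_euler_pair_eq (m : nat) (p q : {poly R}) :
  (size p <= m.+1)%N -> (size q <= m.+1)%N ->
  (size (euler_pair m p q).1 <= m.+1)%N /\ (size (euler_pair m p q).2 <= m)%N.
Proof.
move=> sp sq; split; last exact: size_euler_drop.
by rewrite (leq_trans (size_polyD _ _)) // geq_max size_euler_le.
Qed.

Lemma plnq_zeros_le (m n : nat) (p q : {poly R}) (s : seq R) :
  (n <= m.+1)%N -> (size p <= m.+1)%N -> (size q <= n)%N ->
  (exists x, a < x /\ plnq p q x != 0) -> uniq s ->
  (forall x, x \in s -> a < x /\ plnq p q x = 0) -> (size s <= m + n)%N.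
Proof.
move Ek : (m + n)%N => k; elim/ltn_ind: k m n p q s Ek.
move=> k IH m n p q s Ek nm sp sq f_nz us zs.
have [-> //|s_nil] := eqVneq s [::].
have [f1_nz [t [ut st zt]]] := plnq_descent m f_nz s_nil us zs.
have size_s : size s = (size t).+1 by rewrite st prednK // lt0n size_eq0.
rewrite size_s -Ek; case: (leqP n m) => [nm'|mn].
- have [sp1 sq1] := size_euler_pair_lt nm' sp sq.
  (* For m = 0 also n = 0, so f1 would vanish identically. *)
  case: m => [|m] in nm nm' sp sp1 sq1 Ek f1_nz zt *.
    case: f1_nz => x [_]; rewrite plnq_size0 ?eqxx //.
    by rewrite (leq_trans sq1) // (leq_trans nm').
  rewrite addSn ltnS (IH _ _ m n _ _ t erefl nm' sp1 sq1 f1_nz ut zt) //.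
  by rewrite -Ek addSn.
- have n_eq : n = m.+1 by apply/eqP; rewrite eqn_leq nm.
  rewrite n_eq in sq Ek *; have [sp1 sq1] := size_euler_pair_eq sp sq.
  rewrite addnS ltnS (IH _ _ m m _ _ t erefl (leqnSn m) sp1 sq1 f1_nz ut zt) //.
  by rewrite -Ek addnS.
Qed.

End LogPolynomials.

Theorem mainTheorem10 (R : realType) (m n : nat) (Hmn : (n < m)%N)
  (p q : {poly R}) (Hp : (size p <= m.+1)%N) (Hq : (size q <= n.+1)%N)
  (Hnz : exists x : R, 1 < x /\ plnq p q x != 0)
  (s : seq R) (Hs_uniq : uniq s)
  (Hs_zero : forall x, x \in s -> 1 < x /\ plnq p q x = 0) :
  (size s <= m + n + 1)%N.
Proof.
rewrite addn1 -addnS.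
have le_nm : (n.+1 <= m.+1)%N by rewrite ltnS ltnW.
exact: (@plnq_zeros_le R 1 ler01 m n.+1 p q s le_nm Hp Hq Hnz Hs_uniq Hs_zero).
Qed.
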